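(* For every $n\ge3$ and every $\varepsilon>0$ there is a single-parameter setting with $n$ agents, a downward-closed feasibility family $\mathcal{I}$, and valuations that are single-crossing and SOS, such that every deterministic ex-post IC mechanism has, at some signal profile, welfare at most $\frac{1}{n-1-\varepsilon}$ times the optimal welfare $\max_{S\in\mathcal{I}}\sum_{i\in S}v_i(\mathbf{s})$.
   Context: Single-parameter model: agent $j$ has a scalar signal $s_j$ (possibly from a one-point set), the value $v_j(\mathbf{s})\ge0$ for being served is a public weakly increasing function of the profile; a deterministic mechanism chooses a served set in $\mathcal{I}$ (downward closed) and payments; ex-post IC as usual, which for deterministic mechanisms requires that each agent's service indicator be weakly increasing in her own reported signal. Single-crossing: for all agents $i,\ell$, all $\mathbf{s}_{-i}$ and $s_i<s_i'$, $v_i(s_i',\mathbf{s}_{-i})-v_i(s_i,\mathbf{s}_{-i})\ge v_\ell(s_i',\mathbf{s}_{-i})-v_\ell(s_i,\mathbf{s}_{-i})$. SOS: for every coordinate $j$, $s_j$, $\delta\ge0$, $\mathbf{s}'_{-j}\le\mathbf{s}_{-j}$ coordinate-wise, $v(\mathbf{s}'_{-j},s_j+\delta)-v(\mathbf{s}'_{-j},s_j)\ge v(\mathbf{s}_{-j},s_j+\delta)-v(\mathbf{s}_{-j},s_j)$. *)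

From mathcomp Require Import all_boot.
From Stdlib Require Import Reals.
Set Implicit Arguments. Unset Strict Implicit. Unset Printing Implicit Defensive.

Local Open Scope R_scope.

Section Setting.
Variable n : nat.

Definition profile := 'I_n -> R.
Definition sigspace := 'I_n -> R -> Prop.
Definition valuations := 'I_n -> profile -> R.

Definition valid (Sig : sigspace) (s : profile) : Prop := forall j, Sig j (s j).

Definition upd (s : profile) (i : 'I_n) (t : R) : profile :=
  fun j => if j == i then t else s j.

Definition nonneg_vals (Sig : sigspace) (v : valuations) : Prop :=
  forall i s, valid Sig s -> 0 <= v i s.

Definition monotone_vals (Sig : sigspace) (v : valuations) : Prop :=
  forall i s s', valid Sig s -> valid Sig s' ->
    (forall j, s j <= s' j) -> v i s <= v i s'.

Definition single_crossing (Sig : sigspace) (v : valuations) : Prop :=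
  forall (i l : 'I_n) (s : profile) (t t' : R),
    valid Sig s -> Sig i t -> Sig i t' -> t < t' ->
    v i (upd s i t') - v i (upd s i t) >= v l (upd s i t') - v l (upd s i t).

Definition SOS (Sig : sigspace) (v : valuations) : Prop :=
  forall (k j : 'I_n) (s s' : profile) (t t' : R),
    valid Sig s -> valid Sig s' ->
    (forall m, m != j -> s' m <= s m) ->
    Sig j t -> Sig j t' -> t <= t' ->
    v k (upd s' j t') - v k (upd s' j t) >= v k (upd s j t') - v k (upd s j t).

Definition downward_closed (I : {set {set 'I_n}}) : Prop :=
  forall A B : {set 'I_n}, A \in I -> B \subset A -> B \in I.

Definition welfare (v : valuations) (s : profile) (A : {set 'I_n}) : R :=
  \big[Rplus/0]_(i in A) v i s.

(* max_{A in I} sum_{i in A} v_i(s); the 0 default is harmless since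
   values are nonnegative and set0 \in I *)
Definition opt_welfare (v : valuations) (I : {set {set 'I_n}}) (s : profile) : R :=
  \big[Rmax/0]_(A in I) welfare v s A.

Definition ind (b : bool) : R := if b then 1 else 0.

Definition feasible_alloc (Sig : sigspace) (I : {set {set 'I_n}})
  (x : profile -> {set 'I_n}) : Prop :=
  forall s, valid Sig s -> x s \in I.

Definition expost_IC (Sig : sigspace) (v : valuations)
  (x : profile -> {set 'I_n}) (p : profile -> 'I_n -> R) : Prop :=
  forall (i : 'I_n) (s : profile) (t : R), valid Sig s -> Sig i t ->
    v i s * ind (i \in x s) - p s i >=
    v i s * ind (i \in x (upd s i t)) - p (upd s i t) i.

End Setting.

From Pilot Require Import Defs.
From mathcomp Require Import all_boot.
From Stdlib Require Import Reals.
From HB Require Import structures.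
From Stdlib Require Import Lra Psatz FunctionalExtensionality.

(* The instance is a "star": agent a0 has value 1 + d*s_a0, every other agent
   has value d*s_a0, all signals live in [0,1], and a feasible set either is
   contained in {a0} or avoids a0.  Only a0's signal matters; the valuations
   are single-crossing and SOS with equality in every difference.

   Then, with d = n/eps, look at
   the profile s1 where a0 reports 1.  If a0 is served there, the mechanism
   earns 1+d while the other n-1 agents together are worth (n-1)d.  Otherwise
   monotonicity forces a0 out at the all-zero profile s0, where the
   mechanism earns 0 while serving a0 alone earns 1. *)

Set Implicit Arguments. Unset Strict Implicit. Unset Printing Implicit Defensive.

Local Open Scope R_scope.

(* Real addition as a commutative monoid, so that the generic big-operator
   lemmas of finset apply to [welfare]. *)
HB.instance Definition _ := Monoid.isComLaw.Build R 0 Rplus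
  (fun a b c => esym (Rplus_assoc a b c)) Rplus_comm Rplus_0_l.

Lemma le_bigRmax_seq (T : eqType) (r : seq T) (P : pred T) (F : T -> R) (x : T) :
  x \in r -> P x -> F x <= \big[Rmax/0]_(i <- r | P i) F i.
Proof.
elim: r => [//|y r IH]; rewrite in_cons big_cons => /orP [/eqP -> Px | xr Px].
  by rewrite Px; apply: Rmax_l.
case: (P y); last exact: IH.
exact: Rle_trans (IH xr Px) (Rmax_r _ _).
Qed.

Lemma welfare_le_opt n (v : valuations n) {I : {set {set 'I_n}}} (s : profile n)
  {A : {set 'I_n}} :
  A \in I -> welfare v s A <= opt_welfare v I s.
Proof.
by move=> AI; rewrite /opt_welfare; apply: le_bigRmax_seq => //; exact: mem_index_enum.
Qed.

Lemma welfare_const n (v : valuations n) s (A : {set 'I_n}) c :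
  (forall i, i \in A -> v i s = c) -> welfare v s A = INR #|A| * c.
Proof.
move=> vc; rewrite /welfare (eq_bigr (fun _ => c)) // big_const.
elim: #|A| => [|k IH]; first by rewrite /=; ring.
by rewrite iterS IH S_INR; ring.
Qed.

Lemma INR_pred (m : nat) : (0 < m)%nat -> INR m.-1 = INR m - 1.
Proof. by case: m => [//|m] _; rewrite S_INR /=; ring. Qed.

Lemma upd_upd n (s : profile n) i t : upd (upd s i t) i (s i) = s.
Proof.
apply: functional_extensionality => j; rewrite /upd.
by case: (eqVneq j i) => [-> | _].
Qed.

(* Value monotonicity of deterministic ex-post IC mechanisms: adding the two
   IC constraints between s and (t, s_-i) gives
   (v_i(s) - v_i(t, s_-i)) * (1[i in x s] - 1[i in x (t, s_-i)]) >= 0. *)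
Lemma expost_IC_keeps_served n (Sig : sigspace n) v x p i s t :
  expost_IC Sig v x p -> valid Sig s -> Sig i t ->
  v i s < v i (upd s i t) -> i \in x s -> i \in x (upd s i t).
Proof.
move=> ic vs ti lt_v served; apply/negPn/negP => dropped.
have vs' : valid Sig (upd s i t).
  by move=> j; rewrite /upd; case: eqP => [-> | _].
have ic_s := ic i s t vs ti.
have ic_s' := ic i (upd s i t) (s i) vs' (vs i).
rewrite upd_upd served (negbTE dropped) /= in ic_s ic_s'; lra.
Qed.

Section StarInstance.
Variables (n : nat) (a0 : 'I_n) (d : R).

Definition unit_sig : sigspace n := fun _ t => 0 <= t <= 1.

Definition star_family : {set {set 'I_n}} :=
  [set A : {set 'I_n} | (A \subset [set a0]) || (a0 \notin A)].

Definition star_vals : valuations n :=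
  fun k s => Defs.ind (k == a0) + d * s a0.

Lemma star_family_set0 : set0 \in star_family.
Proof. by rewrite inE sub0set. Qed.

Lemma star_family_a0 : [set a0] \in star_family.
Proof. by rewrite inE subxx. Qed.

Lemma star_family_others : [set~ a0] \in star_family.
Proof. by rewrite !inE eqxx orbT. Qed.

Lemma star_family_downward : downward_closed star_family.
Proof.
move=> A B; rewrite !inE => /orP [sA | nA] sBA; apply/orP.
  by left; exact: subset_trans sBA sA.
by right; apply: contra nA; exact: (subsetP sBA).
Qed.

Lemma star_family_with_a0 A : A \in star_family -> a0 \in A -> A = [set a0].
Proof.
rewrite inE => /orP [sA | nA] inA; last by rewrite inA in nA.
by apply/eqP; rewrite eqEsubset sA sub1set.
Qed.

Lemma star_vals_diff k s j t t' :
  star_vals k (upd s j t') - star_vals k (upd s j t) =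
  if j == a0 then d * (t' - t) else 0.
Proof. by rewrite /star_vals /upd (eq_sym a0 j); case: (j == a0); ring. Qed.

Lemma star_single_crossing : single_crossing unit_sig star_vals.
Proof. by move=> i l s t t' *; rewrite !star_vals_diff; lra. Qed.

Lemma star_SOS : SOS unit_sig star_vals.
Proof. by move=> k j s s' t t' *; rewrite !star_vals_diff; lra. Qed.

Lemma welfare_star_a0 s : welfare star_vals s [set a0] = 1 + d * s a0.
Proof. by rewrite /welfare big_set1 /star_vals /Defs.ind eqxx. Qed.

Lemma welfare_star_others s :
  welfare star_vals s [set~ a0] = (INR n - 1) * (d * s a0).
Proof.
rewrite (@welfare_const _ _ _ _ (d * s a0)); last first.
  by move=> i; rewrite !inE /star_vals /Defs.ind => /negbTE ->; ring.
have n_gt0 : (0 < n)%nat by exact: leq_ltn_trans (leq0n a0) (ltn_ord a0).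
by rewrite cardsC1 card_ord INR_pred.
Qed.

Lemma welfare_star_without_a0 s (A : {set 'I_n}) :
  a0 \notin A -> s a0 = 0 -> welfare star_vals s A = 0.
Proof.
move=> nA s0; rewrite (@welfare_const _ _ _ _ 0) ?Rmult_0_r //.
move=> i iA; rewrite /star_vals s0 /Defs.ind.
by case: eqP => [ia | _]; [rewrite -ia iA in nA | ring].
Qed.

Hypothesis d_gt0 : 0 < d.

Lemma star_nonneg : nonneg_vals unit_sig star_vals.
Proof.
move=> i s vs; have := vs a0; rewrite /star_vals /Defs.ind /unit_sig.
case: (i == a0); nra.
Qed.

Lemma star_monotone : monotone_vals unit_sig star_vals.
Proof.
move=> i s s' _ _ les; have := les a0; rewrite /star_vals.
case: (i == a0); nra.
Qed.

Lemma star_bad_profile (x : profile n -> {set 'I_n}) (p : profile n -> 'I_n -> R) :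
  feasible_alloc unit_sig star_family x -> expost_IC unit_sig star_vals x p ->
  exists s, valid unit_sig s /\ 1 <= opt_welfare star_vals star_family s /\
    (welfare star_vals s (x s) = 0 \/
     welfare star_vals s (x s) = 1 + d /\
     (INR n - 1) * d <= opt_welfare star_vals star_family s).
Proof.
move=> feas ic.
pose s0 : profile n := fun _ => 0.
pose s1 := upd s0 a0 1.
have valid_s0 : valid unit_sig s0 by move=> j; rewrite /unit_sig /s0; lra.
have valid_s1 : valid unit_sig s1.
  by move=> j; rewrite /unit_sig /s1 /upd /s0; case: (j == a0); lra.
have s1_a0 : s1 a0 = 1 by rewrite /s1 /upd eqxx.
have opt_a0 s : 1 + d * s a0 <= opt_welfare star_vals star_family s.
  by rewrite -welfare_star_a0; exact: welfare_le_opt star_family_a0.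
have opt_ge1 s : valid unit_sig s -> 1 <= opt_welfare star_vals star_family s.
  by move=> vs; have := opt_a0 s; have := vs a0; rewrite /unit_sig; nra.
case: (boolP (a0 \in x s1)) => [served1 | dropped1].
- exists s1; split=> //; split; first exact: opt_ge1.
  right; rewrite (star_family_with_a0 (feas _ valid_s1) served1).
  have := welfare_le_opt star_vals s1 star_family_others.
  by rewrite welfare_star_a0 welfare_star_others s1_a0 Rmult_1_r.
- have dropped0 : a0 \notin x s0.
    apply: contra dropped1 => served0.
    apply: (expost_IC_keeps_served ic valid_s0 _ _ served0).
      by rewrite /unit_sig; lra.
    by rewrite /star_vals /s0 /upd eqxx; lra.
  exists s0; split=> //; split; first exact: opt_ge1.
  by left; exact: welfare_star_without_a0.
Qed.

End StarInstance.

Local Close Scope R_scope.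

Theorem mainTheorem14 :
  forall (n : nat), (3 <= n)%N ->
  forall eps : R, (0 < eps)%R ->
  exists (Sig : sigspace n) (I : {set {set 'I_n}}) (v : valuations n),
    set0 \in I /\ downward_closed I /\
    nonneg_vals Sig v /\ monotone_vals Sig v /\
    single_crossing Sig v /\ SOS Sig v /\
    forall (x : profile n -> {set 'I_n}) (p : profile n -> 'I_n -> R),
      feasible_alloc Sig I x -> expost_IC Sig v x p ->
      exists s : profile n, valid Sig s /\
        (0 < opt_welfare v I s)%R /\
        ((INR n - 1 - eps) * welfare v s (x s) <= opt_welfare v I s)%R.
Proof.
Local Open Scope R_scope.
move=> n n_ge3 eps eps_gt0.
pose a0 : 'I_n := Ordinal (leq_trans (isT : (0 < 3)%nat) n_ge3).
pose d := INR n / eps.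
have n_ge3R : 3 <= INR n by have := le_INR 3 n (ssrnat.leP n_ge3); rewrite /=; lra.
have d_gt0 : 0 < d by apply: Rdiv_lt_0_compat; lra.
have eps_d : eps * d = INR n by rewrite /d; field; lra.
exists (@unit_sig n), (star_family a0), (star_vals a0 d).
split; first exact: star_family_set0.
split; first exact: star_family_downward.
split; first exact: star_nonneg.
split; first exact: star_monotone.
split; first exact: star_single_crossing.
split; first exact: star_SOS.
move=> x p feas ic.
have [s [vs [opt_ge1 welfare_s]]] := star_bad_profile d_gt0 feas ic.
exists s; split=> //; split; first lra.
(* (n-1-eps)(1+d) = (n-1)d - 1 - eps, since eps*d = n *)
case: welfare_s => [-> | [-> opt_ge]]; nra.
Qed.
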